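(* Let $B\in\mathbb{R}^{k\times k}$ have an SVD $B=U\,\mathrm{diag}(\sigma_1,\dots,\sigma_k)V'$ with $\sigma_1>\sigma_2>\dots>\sigma_k>0$, and let $\tilde B=B+\Delta_B$. Let $\alpha_B=\min_{i\neq j}|\sigma_i-\sigma_j|$. If there exists $\epsilon>0$ with $$\|\Delta_B\|_F<\epsilon\le\frac{\alpha_B^2}{\sqrt{2}\Big(2\|B\|_F\big(1+\sqrt{1-\tfrac1k}\big)+\sqrt{\alpha_B^2+4\|B\|_F^2\big(1+\sqrt{1-\tfrac1k}\big)^2}\Big)},$$ then $\tilde B$ has an SVD $\tilde B=\tilde U\,\mathrm{diag}(\tilde\sigma_1,\dots,\tilde\sigma_k)\tilde V'$ with $\tilde\sigma_1\ge\dots\ge\tilde\sigma_k$ such that $\|U-\tilde U\|_F\le 2\sqrt{2}\,\dfrac{\epsilon}{\alpha_B}$. *)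

From HB Require Import structures.
From mathcomp Require Import all_boot all_order all_algebra.
Set Implicit Arguments. Unset Strict Implicit. Unset Printing Implicit Defensive.
Import Order.TTheory GRing.Theory Num.Theory.
Local Open Scope ring_scope.

Definition frob (R : rcfType) (m n : nat) (A : 'M[R]_(m, n)) : R :=
  Num.sqrt (\sum_(i < m) \sum_(j < n) A i j ^+ 2).

Definition orthogonal_mx (R : rcfType) (n : nat) (U : 'M[R]_n) : Prop :=
  U^T *m U = 1%:M.

Definition is_svd (R : rcfType) (n : nat) (B U : 'M[R]_n) (s : 'rV[R]_n)
  (V : 'M[R]_n) : Prop :=
  [/\ orthogonal_mx U, orthogonal_mx V, (forall i, 0 <= s 0 i)
    & B = U *m diag_mx s *m V^T].

(* The neutral element of the
   iterated min is the maximum of all |s_i - s_j|, which dominates every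
   term, so for n >= 2 this is exactly the minimum over i <> j. *)
Definition gap_max (R : rcfType) (n : nat) (s : 'rV[R]_n) : R :=
  \big[Num.max/0]_(i < n) \big[Num.max/0]_(j < n) `|s 0 i - s 0 j|.

Definition alpha (R : rcfType) (n : nat) (s : 'rV[R]_n) : R :=
  \big[Num.min/gap_max s]_(i < n) \big[Num.min/gap_max s]_(j < n | i != j)
     `|s 0 i - s 0 j|.

(* Let B + DB = W diag(t) Z' be any SVD; one exists over every real closed field, since
   the symmetric matrix A A' has a real eigenvector, which gives a singular pair of A and,
   after two Householder reflections, an induction on the size.  With E = U' DB V,
   P = U' W and Q = V' Z we have (diag s + E) Q = P diag t and (diag s + E') P = Q diag t,
   so (s_i - t_j)(P_ij + Q_ij) and (s_i + t_j)(P_ij - Q_ij) are, up to sign, entries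
   of E Q + E' P and E Q - E' P, whence
   |s_i - t_j|^2 (P_ij^2 + Q_ij^2) <= (E Q)_ij^2 + (E' P)_ij^2.
   Summed along a row this puts every s_i within ||E|| = ||DB|| of some t_j; as the gaps of
   s exceed 2 ||DB|| this matching is a bijection, and a signed permutation of the columns
   of W and Z sorts t and makes the diagonal of P nonnegative.  Summed off the diagonal it
   bounds (alpha - ||DB||)^2 times the off-diagonal mass of P by 2 ||DB||^2, and an
   orthogonal P with nonnegative diagonal has ||I - P||^2 at most twice that mass.  The
   threshold on eps gives 4 eps <= alpha, which turns the resulting bound
   (alpha - ||DB||)^2 ||U - W||^2 <= 4 ||DB||^2 into ||U - W|| <= 2 sqrt 2 eps / alpha. *)

From HB Require Import structures.
From mathcomp Require Import all_boot all_order all_algebra.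
From mathcomp Require Import complex.
From mathcomp Require Import ring lra.
Set Implicit Arguments. Unset Strict Implicit. Unset Printing Implicit Defensive.
Import Order.TTheory GRing.Theory Num.Theory.
Local Open Scope ring_scope.

Section SquaredFrobenius.
Variable R : rcfType.

Definition sqfrob m n (A : 'M[R]_(m, n)) : R := \sum_i \sum_j A i j ^+ 2.

Lemma frobE n (A : 'M[R]_n) : frob A = Num.sqrt (sqfrob A).
Proof. by []. Qed.

Lemma sqfrob_ge0 m n (A : 'M[R]_(m, n)) : 0 <= sqfrob A.
Proof. by do 2![apply: sumr_ge0 => ? _]; exact: sqr_ge0. Qed.

Lemma sqfrob_tr m n (A : 'M[R]_(m, n)) : sqfrob A^T = sqfrob A.
Proof. by rewrite /sqfrob exchange_big; do 2![apply: eq_bigr => ? _]; rewrite mxE. Qed.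

Lemma sqfrob_trace m n (A : 'M[R]_(m, n)) : sqfrob A = \tr (A^T *m A).
Proof.
rewrite /sqfrob exchange_big; apply: eq_bigr => j _; rewrite !mxE.
by apply: eq_bigr => i _; rewrite !mxE expr2.
Qed.

Lemma sqfrob_row m n (A : 'M[R]_(m, n)) i : sqfrob (row i A) <= sqfrob A.
Proof.
rewrite /sqfrob big_ord1 (bigD1 i) //=.
under eq_bigr do rewrite mxE.
by rewrite lerDl; do 2![apply: sumr_ge0 => ? _]; exact: sqr_ge0.
Qed.

Lemma sqr_entry_le_sqfrob m n (A : 'M[R]_(m, n)) i j : A i j ^+ 2 <= sqfrob A.
Proof.
apply: le_trans (sqfrob_row A i); rewrite /sqfrob big_ord1 (bigD1 j) //= mxE lerDl.
by apply: sumr_ge0 => ? _; exact: sqr_ge0.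
Qed.

Lemma orthogonal_mxC n (U : 'M[R]_n) : orthogonal_mx U -> U *m U^T = 1%:M.
Proof. exact: mulmx1C. Qed.

Lemma orthogonal_mx_tr n (U : 'M[R]_n) : orthogonal_mx U -> orthogonal_mx U^T.
Proof. by move=> oU; rewrite /orthogonal_mx trmxK orthogonal_mxC. Qed.

Lemma orthogonal_mxM n (U V : 'M[R]_n) :
  orthogonal_mx U -> orthogonal_mx V -> orthogonal_mx (U *m V).
Proof.
by move=> oU oV; rewrite /orthogonal_mx trmx_mul mulmxA -(mulmxA V^T) oU mulmx1.
Qed.

Lemma sqfrob_orthogonalL m n (U : 'M[R]_m) (A : 'M[R]_(m, n)) :
  orthogonal_mx U -> sqfrob (U *m A) = sqfrob A.
Proof. by move=> oU; rewrite !sqfrob_trace trmx_mul mulmxA -(mulmxA A^T) oU mulmx1. Qed.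

Lemma sqfrob_orthogonalR m n (A : 'M[R]_(m, n)) (V : 'M[R]_n) :
  orthogonal_mx V -> sqfrob (A *m V) = sqfrob A.
Proof.
move=> /orthogonal_mx_tr oV.
by rewrite -sqfrob_tr trmx_mul sqfrob_orthogonalL // sqfrob_tr.
Qed.

Lemma sqfrob_eq0 m n (A : 'M[R]_(m, n)) : (sqfrob A == 0) = (A == 0).
Proof.
apply/idP/eqP => [|->]; last first.
  by rewrite /sqfrob big1 // => i _; rewrite big1 // => j _; rewrite mxE expr0n.
have row_ge0 i : 0 <= \sum_j A i j ^+ 2 by apply: sumr_ge0 => j _; exact: sqr_ge0.
move=> /eqP /psumr_eq0P-/(_ (fun i _ => row_ge0 i)) A0; apply/matrixP => i j.
move/psumr_eq0P: (A0 i isT) => /(_ (fun j _ => sqr_ge0 (A i j))) /(_ j isT) /eqP.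
by rewrite sqrf_eq0 mxE => /eqP.
Qed.

Lemma mulmx_rowtr n (v : 'rV[R]_n) : v *m v^T = (sqfrob v)%:M.
Proof. by rewrite -sqfrob_tr sqfrob_trace trmxK /mxtrace big_ord1 -mx11_scalar. Qed.

End SquaredFrobenius.

Section SymmetricEigenvector.
Variable R : rcfType.

Local Notation Re := (@complex.Re R).
Local Notation Im := (@complex.Im R).

Lemma complex_eigenvector_parts n (A : 'M[R]_n) (a : R[i]) (v : 'rV[R[i]]_n) :
  v *m map_mx (real_complex R) A = a *: v ->
  let x := map_mx Re v in let y := map_mx Im v in
  x *m A = Re a *: x - Im a *: y /\ y *m A = Im a *: x + Re a *: y.
Proof.
move=> /rowP eig x y.
have ReM (z w : R[i]) : Re (z * w) = Re z * Re w - Im z * Im w by case: z w => ? ? [].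
have ImM (z w : R[i]) : Im (z * w) = Im z * Re w + Re z * Im w.
  by case: z w => ? ? [? ?] /=; rewrite addrC.
have ReMr (z : R[i]) c : Re (z * (c%:C)%C) = Re z * c by case: z => ? ? /=; lra.
have ImMr (z : R[i]) c : Im (z * (c%:C)%C) = Im z * c by case: z => ? ? /=; lra.
split; apply/rowP => j; have := eig j; rewrite !mxE => ej.
- rewrite -ReM -ej raddf_sum; apply: eq_bigr => i _; by rewrite !mxE -ReMr.
- rewrite -ImM -ej raddf_sum; apply: eq_bigr => i _; by rewrite !mxE -ImMr.
Qed.

Lemma sym_eigenvector n (A : 'M[R]_n.+1) : A^T = A ->
  exists l, exists2 v : 'rV[R]_n.+1, v != 0 & v *m A = l *: v.
Proof.
move=> symA.
have : size (char_poly (map_mx (real_complex R) A)) != 1 by rewrite size_char_poly.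
case/closed_rootP => a; rewrite -eigenvalue_root_char => /eigenvalueP [v eig vn0].
have [xA yA] := complex_eigenvector_parts eig.
set x := map_mx _ v in xA yA; set y := map_mx _ v in xA yA.
have xy_neq0 : (x != 0) || (y != 0).
  apply: contraNT vn0; rewrite negb_or !negbK => /andP[/eqP x0 /eqP y0].
  apply/eqP/rowP => j; move/rowP/(_ j): x0; move/rowP/(_ j): y0; rewrite !mxE.
  by case: (v 0 j) => ? ? /= -> ->.
(* Symmetry gives x A y' = y A x', which forces Im a (|x|^2 + |y|^2) = 0. *)
have Ima0 : Im a = 0.
  have tr11 (M : 'M[R]_1) : M^T = M by rewrite [M]mx11_scalar tr_scalar_mx.
  have : x *m A *m y^T = y *m A *m x^T.
    by rewrite -[RHS]tr11 !trmx_mul trmxK symA mulmxA.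
  rewrite xA yA !mulmxDl mulNmx -!scalemxAl -[y *m x^T]tr11 trmx_mul trmxK.
  rewrite !mulmx_rowtr => /matrixP/(_ 0 0); rewrite !mxE !eqxx !mulr1n => eq00.
  have /eqP : Im a * (sqfrob x + sqfrob y) = 0 by rewrite mulrDr; lra.
  rewrite mulf_eq0 paddr_eq0 ?sqfrob_ge0 // !sqfrob_eq0.
  by case/orP: xy_neq0 => /negPf-> /=; rewrite ?andbF orbF => /eqP.
rewrite Ima0 scale0r subr0 in xA; rewrite Ima0 scale0r add0r in yA.
by exists (Re a); case/orP: xy_neq0 => ?; [exists x | exists y].
Qed.

End SymmetricEigenvector.

Section SvdExistence.
Variable R : rcfType.

Lemma row_normalize n (v : 'rV[R]_n) : v != 0 ->
  exists2 c : R, 0 < c & (c *: v) *m (c *: v)^T = 1%:M.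
Proof.
rewrite -sqfrob_eq0 => vn0; have v_gt0 : 0 < sqfrob v by rewrite lt_def vn0 sqfrob_ge0.
exists (Num.sqrt (sqfrob v))^-1; first by rewrite invr_gt0 sqrtr_gt0.
rewrite linearZ -scalemxAl -scalemxAr scalerA mulmx_rowtr scale_scalar_mx -expr2.
by rewrite exprVn sqr_sqrtr ?(ltW v_gt0) // mulVf // gt_eqF.
Qed.

Lemma singular_pair n (A : 'M[R]_n.+1) : exists t : R, exists w z : 'rV[R]_n.+1,
  [/\ 0 <= t, w *m w^T = 1%:M, z *m z^T = 1%:M, w *m A = t *: z & z *m A^T = t *: w].
Proof.
have symAAt : (A *m A^T)^T = A *m A^T by rewrite trmx_mul trmxK.
have [l [v vn0 eig]] := sym_eigenvector symAAt.
have [c c_gt0 w1] := row_normalize vn0; set w := c *: v in w1.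
have wAAt : w *m (A *m A^T) = l *: w by rewrite -scalemxAl eig !scalerA mulrC.
have [wA0|wAn0] := eqVneq (w *m A) 0.
  have : \det A == 0.
    by apply/det0P; exists w; rewrite // scaler_eq0 negb_or gt_eqF.
  rewrite -det_tr => /det0P [z zn0 zAt0]; have [c' _ z1] := row_normalize zn0.
  exists 0, w, (c' *: z); split => //; first by rewrite wA0 scale0r.
  by rewrite -scalemxAl zAt0 !scaler0 scale0r.
have [c2 c2_gt0 z1] := row_normalize wAn0.
have c2l : c2 ^+ 2 * l = 1.
  move: z1; rewrite linearZ /= -scalemxAl -scalemxAr scalerA trmx_mul mulmxA.
  rewrite -(mulmxA w) wAAt -scalemxAl w1 -expr2 scale_scalar_mx mulr1.
  by move/matrixP/(_ 0 0); rewrite !mxE eqxx !mulr1n.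
exists c2^-1, w, (c2 *: (w *m A)); split => //.
- by rewrite invr_ge0 ltW.
- by rewrite scalerA mulVf ?scale1r // gt_eqF.
rewrite -scalemxAl -mulmxA wAAt scalerA; congr (_ *: _).
by apply: (mulfI (lt0r_neq0 c2_gt0)); rewrite mulrA -expr2 c2l mulfV // lt0r_neq0.
Qed.

(* The Householder reflection exchanging e_0 and u. *)
Lemma orthogonal_mx_row0 n (u : 'rV[R]_n.+1) : u *m u^T = 1%:M ->
  exists2 H : 'M[R]_n.+1, orthogonal_mx H & row 0 H = u.
Proof.
move=> u1; set e : 'rV[R]_n.+1 := delta_mx 0 0; set w := e - u.
have [w0|wn0] := eqVneq w 0.
  exists 1%:M; first by rewrite /orthogonal_mx trmx1 mulmx1.
  by rewrite rowE mulmx1 -[u]add0r -w0 /w subrK.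
have e1 : e *m e^T = 1%:M.
  by rewrite trmx_delta mul_delta_mx; apply/matrixP => i j; rewrite !ord1 !mxE.
have eu : e *m u^T = (u 0 0)%:M.
  by rewrite -rowE [LHS]mx11_scalar !mxE.
have ue : u *m e^T = (u 0 0)%:M by rewrite -[u *m e^T]trmxK trmx_mul trmxK eu tr_scalar_mx.
have ew : e *m w^T = (1 - u 0 0)%:M by rewrite linearB /= mulmxBr e1 eu raddfB.
pose c := sqfrob w.
have cE : c = 2 * (1 - u 0 0).
  have := mulmx_rowtr w; rewrite -/c {1}/w linearB /= mulmxBl !mulmxBr e1 eu ue u1.
  by move/matrixP/(_ 0 0); rewrite !mxE eqxx /= !mulr1n => <-; ring.
have c_neq0 : c != 0 by rewrite sqfrob_eq0.
pose X := w^T *m w.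
have XX : X *m X = c *: X.
  by rewrite mulmxA -(mulmxA w^T) mulmx_rowtr mul_mx_scalar scalemxAl.
exists (1%:M - (2 / c) *: X).
  rewrite /orthogonal_mx; have -> : (1%:M - (2 / c) *: X)^T = 1%:M - (2 / c) *: X.
    by rewrite linearB linearZ /= trmx1 trmx_mul trmxK.
  rewrite mulmxBl mul1mx mulmxBr mulmx1.
  have -> : (2 / c) *: X *m ((2 / c) *: X) = (2 / c * (2 / c) * c) *: X.
    by rewrite -scalemxAl -scalemxAr XX !scalerA.
  have -> : 2 / c * (2 / c) * c = 2 / c + 2 / c by field.
  by rewrite scalerDl opprB addrK subrK.
have a1 : 2 / c * (1 - u 0 0) = 1.
  by move: c_neq0; rewrite cE mulf_eq0 negb_or => /andP[_ ?]; field.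
rewrite rowE -/e mulmxBr mulmx1 -scalemxAr /X mulmxA ew mul_scalar_mx scalerA a1.
by rewrite scale1r /w opprB addrC subrK.
Qed.

Lemma is_svd_mulmx n (A W Z U V : 'M[R]_n) s :
  orthogonal_mx U -> orthogonal_mx V -> is_svd A W s Z ->
  is_svd (U *m A *m V^T) (U *m W) s (V *m Z).
Proof.
move=> oU oV [oW oZ s_ge0 ->].
by split; rewrite ?trmx_mul ?mulmxA //; exact: orthogonal_mxM.
Qed.

Lemma is_svd_block1 n t (A W Z : 'M[R]_n) s : 0 <= t -> is_svd A W s Z ->
  is_svd (block_mx t%:M 0 0 A : 'M_(1 + n))
         (block_mx 1%:M 0 0 W) (row_mx t%:M s) (block_mx 1%:M 0 0 Z).
Proof.
move=> t_ge0 [oW oZ s_ge0 ->].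
have oB (Y : 'M[R]_n) : orthogonal_mx Y -> orthogonal_mx (block_mx 1%:M 0 0 Y : 'M_(1 + n)).
  move=> oY; rewrite /orthogonal_mx tr_block_mx !trmx0 trmx1 mulmx_block oY.
  by rewrite !mulmx0 !mul0mx !addr0 !add0r mulmx1 -scalar_mx_block.
split; [exact: oB | exact: oB | |].
  by move=> i; rewrite mxE; case: splitP => j _; rewrite ?mxE ?(ord1 j) ?mulr1n.
rewrite diag_mx_row tr_block_mx !trmx0 trmx1 !mulmx_block.
rewrite !mulmx0 !mul0mx !mulmx1 !mul1mx !addr0 !add0r.
rewrite mul0mx; congr block_mx.
by apply/matrixP => i j; rewrite !ord1 !mxE.
Qed.

Lemma block_mx_row0_col0 n (G : 'M[R]_(1 + n)) t :
  row 0 G = t *: delta_mx 0 0 -> col 0 G = t *: delta_mx 0 0 ->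
  G = block_mx t%:M 0 0 (drsubmx G).
Proof.
move=> /rowP rowG /colP colG; rewrite -[G in LHS]submxK.
have l0 : lshift n (0 : 'I_1) = 0 by apply: val_inj.
have r0 (j : 'I_n) : (rshift 1 j == 0) = false by [].
congr block_mx; apply/matrixP => i j; rewrite !mxE !ord1 ?l0.
- by have := rowG 0; rewrite !mxE eqxx mulr1.
- by have := rowG (rshift 1 j); rewrite !mxE r0 andbF mulr0.
- by have := colG (rshift 1 i); rewrite !mxE r0 mulr0.
Qed.

Lemma svd_exists n (A : 'M[R]_n) : exists (W Z : 'M[R]_n) (s : 'rV[R]_n), is_svd A W s Z.
Proof.
elim: n A => [|n IH] A.
  exists 1%:M, 1%:M, 0; split; rewrite /orthogonal_mx ?trmx1 ?mulmx1 //; first by case.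
  by apply/matrixP => -[].
have [t [w [z [t_ge0 w1 z1 wA zAt]]]] := singular_pair A.
have [H1 oH1 H1w] := orthogonal_mx_row0 w1; have [H2 oH2 H2z] := orthogonal_mx_row0 z1.
pose G : 'M[R]_(1 + n) := H1 *m A *m H2^T.
have row0G : row 0 G = t *: delta_mx 0 0.
  rewrite /G !row_mul H1w wA -scalemxAl -H2z -row_mul orthogonal_mxC //.
  by rewrite rowE mulmx1.
have col0G : col 0 G = t *: delta_mx 0 0.
  have : row 0 G^T = t *: delta_mx 0 0.
    rewrite /G !trmx_mul trmxK !row_mul H2z mulmxA zAt -scalemxAl -H1w -row_mul.
    by rewrite orthogonal_mxC // rowE mulmx1.
  by rewrite -tr_col => /(congr1 trmx); rewrite trmxK linearZ /= trmx_delta.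
have [W [Z [s svdG]]] := IH (drsubmx G).
exists (H1^T *m (block_mx 1%:M 0 0 W : 'M_(1 + n))),
  (H2^T *m (block_mx 1%:M 0 0 Z : 'M_(1 + n))), (row_mx t%:M s : 'rV_(1 + n)).
have -> : A = H1^T *m G *m H2^T^T.
  by rewrite trmxK /G !mulmxA oH1 mul1mx -mulmxA oH2 mulmx1.
rewrite [G in H1^T *m G](block_mx_row0_col0 row0G col0G).
by apply: is_svd_mulmx; [exact: orthogonal_mx_tr..|exact: is_svd_block1].
Qed.

End SvdExistence.

(* Adding and subtracting the equations gives (s - y)(a + b) = -(r + q) and
   (s + y)(a - b) = r - q, where s + y >= |s - y| >= d. *)
Lemma sylvester_entry_bound (R : realFieldType) (s y a b r q d : R) :
  0 <= s -> 0 <= y -> 0 <= d -> d <= `|s - y| ->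
  s * b + r = a * y -> s * a + q = b * y ->
  d ^+ 2 * (a ^+ 2 + b ^+ 2) <= r ^+ 2 + q ^+ 2.
Proof.
move=> s_ge0 y_ge0 d_ge0 d_le eq1 eq2.
have sum_eq : (s - y) * (a + b) = - (r + q) by lra.
have dif_eq : (s + y) * (a - b) = r - q by lra.
have d2_le : d ^+ 2 <= (s - y) ^+ 2.
  by rewrite -[(s - y) ^+ 2](real_normK (num_real _)) lerXn2r ?nnegrE ?normr_ge0.
have sum_le : d ^+ 2 * (a + b) ^+ 2 <= (r + q) ^+ 2.
  by rewrite -[(r + q) ^+ 2]sqrrN -sum_eq exprMn ler_wpM2r // sqr_ge0.
have dif_le : d ^+ 2 * (a - b) ^+ 2 <= (r - q) ^+ 2.
  by rewrite -dif_eq exprMn ler_wpM2r ?sqr_ge0 //; apply: le_trans d2_le _; nra.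
nra.
Qed.

Section OrthogonalNearIdentity.
Variable R : rcfType.

Definition sqoffdiag n (A : 'M[R]_n) : R := \sum_j \sum_(i | i != j) A i j ^+ 2.

Lemma sqoffdiag_ge0 n (A : 'M[R]_n) : 0 <= sqoffdiag A.
Proof. by do 2![apply: sumr_ge0 => ? _]; exact: sqr_ge0. Qed.

Lemma sqfrob_row_orthogonal n (P : 'M[R]_n) i : orthogonal_mx P -> sqfrob (row i P) = 1.
Proof.
move=> /orthogonal_mxC /matrixP/(_ i i); rewrite !mxE eqxx mulr1n /sqfrob big_ord1 => <-.
by apply: eq_bigr => j _; rewrite !mxE expr2.
Qed.

Lemma sqfrob_1_sub_orthogonal n (P : 'M[R]_n) :
  orthogonal_mx P -> (forall j, 0 <= P j j) -> sqfrob (1%:M - P) <= 2 * sqoffdiag P.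
Proof.
move=> /matrixP oP P_ge0; rewrite /sqfrob exchange_big mulr_sumr; apply: ler_sum => j _.
have col1 : \sum_i P i j ^+ 2 = 1.
  by have := oP j j; rewrite !mxE eqxx mulr1n => <-; apply: eq_bigr => i _; rewrite mxE expr2.
rewrite (bigD1 j) //= in col1; rewrite (bigD1 j) //= !mxE eqxx mulr1n.
have -> : \sum_(i | i != j) (1%:M - P) i j ^+ 2 = \sum_(i | i != j) P i j ^+ 2.
  by apply: eq_bigr => i ij; rewrite !mxE (negPf ij) mulr0n sub0r sqrrN.
have := P_ge0 j; have : 0 <= \sum_(i | i != j) P i j ^+ 2.
  by apply: sumr_ge0 => i _; exact: sqr_ge0.
move: col1; set O := \sum_(i | _) _; set p := P j j; nra.
Qed.

End OrthogonalNearIdentity.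

Section SignedPermutation.
Variables (R : rcfType) (k : nat) (phi : 'I_k -> 'I_k) (g : 'I_k -> R).

Definition signed_perm_mx : 'M[R]_k := \matrix_(i, j) (g j * (i == phi j)%:R).

Lemma mul_signed_perm_mx m (X : 'M[R]_(m, k)) i j :
  (X *m signed_perm_mx) i j = g j * X i (phi j).
Proof.
rewrite mxE (bigD1 (phi j)) //= big1 => [|l lj]; last by rewrite mxE (negPf lj) !mulr0.
by rewrite mxE eqxx mulr1 addr0 mulrC.
Qed.

Hypotheses (phi_inj : injective phi) (g_sign : forall j, g j ^+ 2 = 1).

Lemma signed_perm_mx_orthogonal : orthogonal_mx signed_perm_mx.
Proof.
apply/matrixP => i j; rewrite mul_signed_perm_mx !mxE (inj_eq phi_inj).
by have [->|] := eqVneq i j; rewrite ?mulr1 -?expr2 ?g_sign // !mulr0.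
Qed.

Lemma is_svd_signed_perm (A W Z : 'M[R]_k) (t : 'rV[R]_k) : is_svd A W t Z ->
  is_svd A (W *m signed_perm_mx) (\row_j t 0 (phi j)) (Z *m signed_perm_mx).
Proof.
move=> [oW oZ t_ge0 ->]; have oS := signed_perm_mx_orthogonal.
split; [exact: orthogonal_mxM | exact: orthogonal_mxM | by move=> j; rewrite mxE |].
have dS : diag_mx t *m signed_perm_mx = signed_perm_mx *m diag_mx (\row_j t 0 (phi j)).
  apply/matrixP => i j; rewrite mul_diag_mx mul_mx_diag !mxE.
  by have [->|_] := eqVneq i (phi j); [rewrite mulr1 mulrC | rewrite !mulr0 mul0r].
rewrite trmx_mul !mulmxA -(mulmxA W signed_perm_mx) -dS mulmxA.
by rewrite -(mulmxA (W *m diag_mx t) signed_perm_mx) orthogonal_mxC // mulmx1.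
Qed.

End SignedPermutation.

Section Gap.
Variable R : rcfType.

Lemma alpha_le_dist k (s : 'rV[R]_k) i j : i != j -> alpha s <= `|s 0 i - s 0 j|.
Proof. by move=> ij; apply: le_trans (bigmin_le _ i _) _; exact: bigmin_le_cond. Qed.

Lemma alpha_ge0 k (s : 'rV[R]_k) : 0 <= alpha s.
Proof.
have max_ge0 : 0 <= gap_max s.
  apply: (big_ind (fun x => 0 <= x)) => // [x y|i _]; first by rewrite le_max => ->.
  by apply: (big_ind (fun x => 0 <= x)) => // x y; rewrite le_max => ->.
apply: (big_ind (fun x => 0 <= x)) => // [x y|i _]; first by rewrite le_min => -> ->.
by apply: (big_ind (fun x => 0 <= x)) => // x y; rewrite le_min => -> ->.
Qed.

Lemma alpha_small k (s : 'rV[R]_k) : (k <= 1)%N -> alpha s = 0.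
Proof.
case: k s => [|[|//]] s _; first by rewrite /alpha /gap_max !big_ord0.
rewrite /alpha (eq_bigr (fun _ => gap_max s)) => [|i _]; last first.
  by rewrite big_pred0 // => j; rewrite !ord1 eqxx.
by rewrite /gap_max !big_ord_recl !big_ord0 subrr normr0 !maxxx minxx.
Qed.

Lemma alpha_le_sqfrob_diag k (s : 'rV[R]_k) : (forall i, 0 <= s 0 i) ->
  alpha s <= Num.sqrt (sqfrob (diag_mx s)).
Proof.
move=> s_ge0; case: (leqP k 1) => [/alpha_small-> | k_gt1]; first exact: sqrtr_ge0.
pose i0 : 'I_k := Ordinal (ltnW k_gt1); pose i1 : 'I_k := Ordinal k_gt1.
have entry_le i : s 0 i <= Num.sqrt (sqfrob (diag_mx s)).
  rewrite -[s 0 i]ger0_norm // -sqrtr_sqr; apply: ler_wsqrtr.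
  by have := sqr_entry_le_sqfrob (diag_mx s) i i; rewrite mxE eqxx mulr1n.
apply: le_trans (@alpha_le_dist _ s i0 i1 isT) _.
have := entry_le i0; have := entry_le i1; have := s_ge0 i0; have := s_ge0 i1.
by rewrite ler_norml => *; apply/andP; split; lra.
Qed.

Lemma alpha_sub_le_dist k (s t : 'rV[R]_k) e i j :
  (forall j, `|s 0 j - t 0 j| <= e) -> i != j -> alpha s - e <= `|s 0 i - t 0 j|.
Proof.
move=> near ij; have := alpha_le_dist s ij; have := near j.
have := ler_distD (t 0 j) (s 0 i) (s 0 j); rewrite [`|t 0 j - _|]distrC; lra.
Qed.

Lemma near_sorted k (s t : 'rV[R]_k) e :
  (forall i j : 'I_k, (i < j)%N -> s 0 j < s 0 i) ->
  (forall i, `|s 0 i - t 0 i| <= e) -> 2 * e < alpha s ->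
  forall i j : 'I_k, (i <= j)%N -> t 0 j <= t 0 i.
Proof.
move=> s_decr near e_small i j; rewrite leq_eqVlt => /orP[/eqP/val_inj-> // | ij].
have ij' : i != j by rewrite -val_eqE neq_ltn ij.
have := alpha_le_dist s ij'; rewrite ger0_norm; last by rewrite subr_ge0 ltW // s_decr.
by have := near i; have := near j; rewrite !ler_norml => /andP[? ?] /andP[? ?] ?; lra.
Qed.

End Gap.

Section Estimates.
Variable R : rcfType.

(* The hypothesis on eps, with a = alpha, F = ||B||_F and c = 1 + sqrt (1 - 1/k). *)
Lemma threshold_le_quarter (a F c eps : R) : 0 < eps -> 0 <= a -> a <= F -> 1 <= c ->
  eps <= a ^+ 2 / (Num.sqrt 2 * (2 * F * c + Num.sqrt (a ^+ 2 + 4 * F ^+ 2 * c ^+ 2))) ->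
  4 * eps <= a.
Proof.
set S := Num.sqrt (a ^+ 2 + _) => eps_gt0 a_ge0 a_le c_ge1.
have S_ge : 2 * F * c <= S.
  rewrite -[2 * F * c]ger0_norm -?sqrtr_sqr; last by rewrite !mulr_ge0 //; lra.
  apply: ler_wsqrtr; have -> : (2 * F * c) ^+ 2 = 4 * F ^+ 2 * c ^+ 2 by ring.
  by rewrite lerDr sqr_ge0.
have sqrt2_ge1 : 1 <= Num.sqrt (2 : R) by rewrite -[X in X <= _]sqrtr1 ler_wsqrtr // ler1n.
have F_le : F <= F * c by apply: ler_peMr => //; lra.
have T_ge : 4 * a <= 2 * F * c + S by lra.
set D := Num.sqrt 2 * _; have D_ge : 4 * a <= D.
  by apply: le_trans T_ge _; apply: ler_peMl => //; lra.
have [a0|an0] := eqVneq a 0; first by move: D_ge; rewrite a0 expr0n mul0r => *; lra.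
have a_gt0 : 0 < a by rewrite lt_def an0.
by rewrite ler_pdivlMr; [nra | lra].
Qed.

Lemma sqrt_le_gap_bound (X e eps a : R) : 0 <= X -> 0 <= e -> e < eps -> 4 * eps <= a ->
  (a - e) ^+ 2 * X <= 4 * e ^+ 2 -> Num.sqrt X <= 2 * Num.sqrt 2 * eps / a.
Proof.
move=> X_ge0 e_ge0 e_lt a_ge X_le; have a_gt0 : 0 < a by lra.
have y_ge0 : 0 <= 2 * Num.sqrt 2 * eps / a by rewrite divr_ge0 ?mulr_ge0 ?sqrtr_ge0 //; lra.
rewrite -[_ / a]ger0_norm // -sqrtr_sqr; apply: ler_wsqrtr.
rewrite -(ler_pM2r (exprn_gt0 2 a_gt0)) expr_div_n !exprMn sqr_sqrtr ?ler0n //.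
rewrite mulfVK ?expf_neq0 ?lt0r_neq0 //.
(* a - e >= 3 a / 4 and 64 / 9 <= 8. *)
have : 9 * a ^+ 2 <= 16 * (a - e) ^+ 2 by nra.
nra.
Qed.

End Estimates.

Section SingularPerturbation.
Variables (R : rcfType) (k : nat) (s t : 'rV[R]_k) (E P Q : 'M[R]_k).
Hypotheses (s_ge0 : forall i, 0 <= s 0 i) (t_ge0 : forall j, 0 <= t 0 j).
Hypotheses (oP : orthogonal_mx P) (oQ : orthogonal_mx Q).
Hypothesis svdE : diag_mx s + E = P *m diag_mx t *m Q^T.

Let eqQ i j : s 0 i * Q i j + (E *m Q) i j = P i j * t 0 j.
Proof.
have : (diag_mx s + E) *m Q = P *m diag_mx t by rewrite svdE -mulmxA oQ mulmx1.
by move/matrixP/(_ i j); rewrite mulmxDl mxE mul_diag_mx mxE mul_mx_diag mxE.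
Qed.

Let eqP i j : s 0 i * P i j + (E^T *m P) i j = Q i j * t 0 j.
Proof.
have : (diag_mx s + E^T) *m P = Q *m diag_mx t.
  rewrite -tr_diag_mx -linearD /= svdE !trmx_mul trmxK tr_diag_mx -!mulmxA.
  by rewrite oP mulmx1.
by move/matrixP/(_ i j); rewrite mulmxDl mxE mul_diag_mx mxE mul_mx_diag mxE.
Qed.

Lemma sylvester_row_bound i d : 0 <= d -> (forall j, d <= `|s 0 i - t 0 j|) ->
  d <= Num.sqrt (sqfrob E).
Proof.
move=> d_ge0 d_le.
have sum_le : d ^+ 2 * (sqfrob (row i P) + sqfrob (row i Q)) <=
              sqfrob (row i (E *m Q)) + sqfrob (row i (E^T *m P)).
  rewrite /sqfrob !big_ord1 -big_split mulr_sumr -big_split /=; apply: ler_sum => j _.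
  have := sylvester_entry_bound (s_ge0 i) (t_ge0 j) d_ge0 (d_le j) (eqQ i j) (eqP i j).
  by rewrite !mxE; apply.
rewrite !row_mul !sqfrob_orthogonalR // in sum_le.
rewrite (sqfrob_row_orthogonal _ oP) (sqfrob_row_orthogonal _ oQ) in sum_le.
have := sqfrob_row E i; have := sqfrob_row E^T i; rewrite sqfrob_tr => *.
rewrite -[d]ger0_norm // -sqrtr_sqr; apply: ler_wsqrtr; lra.
Qed.

Lemma exists_near_singular_value i : exists j, `|s 0 i - t 0 j| <= Num.sqrt (sqfrob E).
Proof.
have [j0 _ j0_min] := @arg_minP _ _ _ i xpredT (fun j => `|s 0 i - t 0 j|) isT.
by exists j0; apply: sylvester_row_bound => // j; exact: j0_min.
Qed.

Lemma sqoffdiag_sylvester_bound d : 0 <= d -> (forall i j, i != j -> d <= `|s 0 i - t 0 j|) ->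
  d ^+ 2 * (sqoffdiag P + sqoffdiag Q) <= 2 * sqfrob E.
Proof.
move=> d_ge0 d_le.
have -> : 2 * sqfrob E = sqfrob (E *m Q) + sqfrob (E^T *m P).
  by rewrite !sqfrob_orthogonalR // sqfrob_tr; ring.
rewrite /sqoffdiag /sqfrob -big_split mulr_sumr exchange_big [X in _ + X]exchange_big.
rewrite -big_split /=; apply: ler_sum => j _; rewrite -big_split /= mulr_sumr.
apply: le_trans (_ : _ <= \sum_(i | i != j) ((E *m Q) i j ^+ 2 + (E^T *m P) i j ^+ 2)) _.
  apply: ler_sum => i ij.
  exact: sylvester_entry_bound (d_le i j ij) (eqQ i j) (eqP i j).
rewrite -big_split /= [X in _ <= X](bigD1 j) //= lerDr.
by apply: addr_ge0; exact: sqr_ge0.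
Qed.

Lemma sqfrob_1_sub_sylvester_bound d : 0 <= d ->
  (forall i j, i != j -> d <= `|s 0 i - t 0 j|) -> (forall j, 0 <= P j j) ->
  d ^+ 2 * sqfrob (1%:M - P) <= 4 * sqfrob E.
Proof.
move=> d_ge0 d_le P_ge0; have := sqoffdiag_sylvester_bound d_ge0 d_le.
have := ler_wpM2l (sqr_ge0 d) (sqfrob_1_sub_orthogonal oP P_ge0).
have := mulr_ge0 (sqr_ge0 d) (sqoffdiag_ge0 Q); rewrite mulrDr; lra.
Qed.

End SingularPerturbation.

Section SvdPerturbation.
Variables (R : rcfType) (k : nat) (B DB U V : 'M[R]_k) (s : 'rV[R]_k).
Hypothesis svdB : is_svd B U s V.

Lemma alpha_le_frob : alpha s <= frob B.
Proof.
have [oU oV s_ge0 ->] := svdB.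
rewrite frobE sqfrob_orthogonalR ?sqfrob_orthogonalL ?alpha_le_sqfrob_diag //.
exact: orthogonal_mx_tr.
Qed.

Lemma sqfrob_rotated : sqfrob (U^T *m DB *m V) = sqfrob DB.
Proof.
have [oU oV _ _] := svdB.
by rewrite sqfrob_orthogonalR // sqfrob_orthogonalL //; exact: orthogonal_mx_tr.
Qed.

Lemma diag_add_rotated_svd W Z t : is_svd (B + DB) W t Z ->
  diag_mx s + U^T *m DB *m V = (U^T *m W) *m diag_mx t *m (V^T *m Z)^T.
Proof.
have [oU oV _ defB] := svdB; move=> [_ _ _ defBD].
have <- : U^T *m (B + DB) *m V = diag_mx s + U^T *m DB *m V.
  by rewrite mulmxDr mulmxDl defB !mulmxA oU mul1mx -mulmxA oV mulmx1.
by rewrite defBD trmx_mul trmxK !mulmxA.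
Qed.

Lemma exists_matched_svd W Z t : is_svd (B + DB) W t Z -> 2 * frob DB < alpha s ->
  exists (W' Z' : 'M[R]_k) (t' : 'rV[R]_k),
    [/\ is_svd (B + DB) W' t' Z', forall i, `|s 0 i - t' 0 i| <= frob DB
      & forall j, 0 <= (U^T *m W') j j].
Proof.
move=> svdBD DB_small; have [oU oV s_ge0 _] := svdB; have [oW oZ t_ge0 _] := svdBD.
have oP : orthogonal_mx (U^T *m W) by apply/orthogonal_mxM/oW/orthogonal_mx_tr.
have oQ : orthogonal_mx (V^T *m Z) by apply/orthogonal_mxM/oZ/orthogonal_mx_tr.
have [phi near] := fin_all_exists
  (exists_near_singular_value s_ge0 t_ge0 oP oQ (diag_add_rotated_svd svdBD)).
rewrite sqfrob_rotated -frobE in near.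
have phi_inj : injective phi.
  move=> i i' phi_ii'; apply/eqP; apply: contraT => ii'.
  have := alpha_le_dist s ii'; have := near i; have := near i'; rewrite -phi_ii'.
  have := ler_distD (t 0 (phi i)) (s 0 i) (s 0 i'); rewrite [`|t 0 _ - s 0 i'|]distrC.
  lra.
pose g j : R := if 0 <= (U^T *m W) j (phi j) then 1 else -1.
have g_sign j : g j ^+ 2 = 1 by rewrite /g; case: ifP; rewrite ?sqrrN expr1n.
exists (W *m signed_perm_mx phi g), (Z *m signed_perm_mx phi g), (\row_j t 0 (phi j)).
split; first exact: is_svd_signed_perm.
  by move=> i; rewrite mxE.
move=> j; rewrite mulmxA mul_signed_perm_mx /g; case: ifP => [|/negbT]; first by rewrite mul1r.
by rewrite -ltNge mulN1r oppr_ge0 => /ltW.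
Qed.

Lemma matched_svd_bound W Z t : is_svd (B + DB) W t Z ->
  (forall i, `|s 0 i - t 0 i| <= frob DB) -> (forall j, 0 <= (U^T *m W) j j) ->
  2 * frob DB < alpha s ->
  (alpha s - frob DB) ^+ 2 * sqfrob (U - W) <= 4 * frob DB ^+ 2.
Proof.
move=> svdBD near diag_ge0 DB_small.
have [oU oV s_ge0 _] := svdB; have [oW oZ t_ge0 _] := svdBD.
have oP : orthogonal_mx (U^T *m W) by apply/orthogonal_mxM/oW/orthogonal_mx_tr.
have oQ : orthogonal_mx (V^T *m Z) by apply/orthogonal_mxM/oZ/orthogonal_mx_tr.
have -> : U - W = U *m (1%:M - U^T *m W).
  by rewrite mulmxBr mulmx1 mulmxA orthogonal_mxC // mul1mx.
have DB_ge0 : 0 <= frob DB := sqrtr_ge0 _.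
rewrite sqfrob_orthogonalL // [in X in _ <= X]frobE sqr_sqrtr ?sqfrob_ge0 // -sqfrob_rotated.
apply: (sqfrob_1_sub_sylvester_bound s_ge0 t_ge0 oP oQ (diag_add_rotated_svd svdBD)).
- by rewrite subr_ge0 ltW //; lra.
- by move=> i j; apply: alpha_sub_le_dist.
- exact: diag_ge0.
Qed.

End SvdPerturbation.

Theorem corollaryC1 (R : rcfType) (k : nat) (B DB U V : 'M[R]_k)
  (s : 'rV[R]_k) (eps : R) :
  is_svd B U s V ->
  (forall i j : 'I_k, (i < j)%N -> s 0 j < s 0 i) ->
  (forall i : 'I_k, 0 < s 0 i) ->
  0 < eps ->
  frob DB < eps ->
  eps <= alpha s ^+ 2 /
         (Num.sqrt 2 *
          (2 * frob B * (1 + Num.sqrt (1 - k%:R^-1)) +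
           Num.sqrt (alpha s ^+ 2 +
                     4 * frob B ^+ 2 * (1 + Num.sqrt (1 - k%:R^-1)) ^+ 2))) ->
  exists (Ut Vt : 'M[R]_k) (st : 'rV[R]_k),
    [/\ is_svd (B + DB) Ut st Vt,
        (forall i j : 'I_k, (i <= j)%N -> st 0 j <= st 0 i)
      & frob (U - Ut) <= 2 * Num.sqrt 2 * eps / alpha s].
Proof.
move=> svdB s_decr _ eps_gt0 DB_lt eps_le.
have eps_quarter : 4 * eps <= alpha s.
  apply: (threshold_le_quarter eps_gt0 (alpha_ge0 s) (alpha_le_frob svdB) _ eps_le).
  by rewrite lerDl sqrtr_ge0.
have DB_ge0 : 0 <= frob DB := sqrtr_ge0 _.
have DB_small : 2 * frob DB < alpha s by lra.
have [W [Z [t svdBD]]] := svd_exists (B + DB).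
have [W' [Z' [t' [svd' near diag_ge0]]]] := exists_matched_svd svdB svdBD DB_small.
exists W', Z', t'; split => //; first exact: near_sorted s_decr near DB_small.
rewrite frobE; apply: sqrt_le_gap_bound (sqfrob_ge0 _) DB_ge0 DB_lt eps_quarter _.
exact: (matched_svd_bound svdB svd' near diag_ge0 DB_small).
Qed.
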